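(* Let $x\in J$ and let $\mathcal I=\{I_i\}_{i\in F}$ and $\mathcal L=\{L_j\}_{j\in G}$ be $x$-norming partitions. Then for every $i\in F$ and $j\in G$, either $I_i\subset L_j$, or $L_j\subset I_i$, or $I_i\cap L_j=\emptyset$.
   Context: For a real sequence $x=(x(n))_{n\in\mathbb N}$ let $\|x\|_J=\sup\bigl(\sum_{i=1}^n|\sum_{k\in I_i}x(k)|^2\bigr)^{1/2}$ over all $n$ and all families of pairwise disjoint intervals $I_1,\dots,I_n$ of $\mathbb N$ (intervals: nonempty sets of consecutive positive integers, possibly infinite). $J=\{x:\|x\|_J<\infty\}$; for $x\in J$ and any interval $I$ the series $\sum_{k\in I}x(k)$ converges. $\mathrm{supp}(x)=\{n:x(n)\ne0\}$. A family of intervals $\mathcal I=\{I_i\}_{i\in F}$: $F=\{1,\dots,k\}$ or $F=\mathbb N$, each $I_i$ an interval, $\max I_i<\min I_{i+1}$ whenever $i+1\in F$; $\|x\|_{\mathcal I}=(\sum_{i\in F}|\sum_{k\in I_i}x(k)|^2)^{1/2}$; it is $x$-norming if $\|x\|_{\mathcal I}=\|x\|_J$. For nonempty $L\subset\mathbb N$, $\sup L=\max L$ if finite and $\infty$ otherwise. An $x$-norming partition is an $x$-norming family with $\{\min I_i,\max I_i\}\subset\mathrm{supp}(x)$ for all $i<\sup F$, and, if $F$ is finite, $\min I_i\in\mathrm{supp}(x)$ and $\sup I_i=\sup\mathrm{supp}(x)$ for $i=\sup F$. *)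

From Stdlib Require Import Reals Lra Lia ClassicalEpsilon.
From Coquelicot Require Import Coquelicot.
Open Scope R_scope.

(* A real sequence x = (x(n))_{n >= 1} is a function nat -> R; the value x 0
   is irrelevant (all intervals consist of positive integers). *)

Definition is_interval (I : nat -> Prop) : Prop :=
  (exists n, I n) /\
  (forall n, I n -> (1 <= n)%nat) /\
  (forall a b c, I a -> I c -> (a <= b)%nat -> (b <= c)%nat -> I b).

Definition isum (x : nat -> R) (I : nat -> Prop) : R :=
  Series (fun k => if excluded_middle_informative (I k) then x k else 0).

Fixpoint rsum (f : nat -> R) (n : nat) : R :=
  match n with O => 0 | S m => rsum f m + f m end.

(* squares of the quantities whose sup defines ||x||_J:
   sum_{i=1}^n |sum_{k in I_i} x(k)|^2 over pairwise disjoint intervals I_1..I_n *)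
Definition J_values (x : nat -> R) (s : R) : Prop :=
  exists (n : nat) (f : nat -> nat -> Prop),
    (forall i, (1 <= i <= n)%nat -> is_interval (f i)) /\
    (forall i j, (1 <= i <= n)%nat -> (1 <= j <= n)%nat -> i <> j ->
       forall k, f i k -> f j k -> False) /\
    s = rsum (fun i => (isum x (f (S i)))^2) n.

(* x in J: the supremum is finite (together with the convergence of the
   series over infinite intervals, which is what gives the sums meaning). *)
Definition in_J (x : nat -> R) : Prop :=
  (forall I, is_interval I ->
     ex_series (fun k => if excluded_middle_informative (I k) then x k else 0)) /\
  (exists M, forall s, J_values x s -> s <= M).

Definition J_norm (x : nat -> R) : R := sqrt (real (Lub_Rbar (J_values x))).

(* Index set F of a family: [Some k] codes F = {1,...,k} (k >= 1),
   [None] codes F = N = {1,2,...}. *)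
Definition in_F (F : option nat) (i : nat) : Prop :=
  (1 <= i)%nat /\ match F with Some k => (i <= k)%nat | None => True end.

Definition is_family (F : option nat) (I : nat -> nat -> Prop) : Prop :=
  match F with Some k => (1 <= k)%nat | None => True end /\
  (forall i, in_F F i -> is_interval (I i)) /\
  (forall i, in_F F i -> in_F F (S i) ->
     forall a b, I i a -> I (S i) b -> (a < b)%nat).

Definition family_norm (x : nat -> R) (F : option nat) (I : nat -> nat -> Prop) : R :=
  match F with
  | Some k => sqrt (rsum (fun i => (isum x (I (S i)))^2) k)
  | None => sqrt (Series (fun i => (isum x (I (S i)))^2))
  end.

Definition norming (x : nat -> R) (F : option nat) (I : nat -> nat -> Prop) : Prop :=
  is_family F I /\ family_norm x F I = J_norm x.

Definition supp (x : nat -> R) (n : nat) : Prop := (1 <= n)%nat /\ x n <> 0.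

Definition is_min (L : nat -> Prop) (m : nat) : Prop := L m /\ forall n, L n -> (m <= n)%nat.
Definition is_max (L : nat -> Prop) (m : nat) : Prop := L m /\ forall n, L n -> (n <= m)%nat.

(* sup L = max L if L is finite (Some m), infinity otherwise (None). *)
Definition is_sup_nat (L : nat -> Prop) (v : option nat) : Prop :=
  match v with
  | Some m => is_max L m
  | None => forall m, exists n, L n /\ (m < n)%nat
  end.

Definition norming_partition (x : nat -> R) (F : option nat) (I : nat -> nat -> Prop) : Prop :=
  norming x F I /\
  (forall i, in_F F i ->
     match F with Some k => (i < k)%nat | None => True end ->
     exists a b, is_min (I i) a /\ is_max (I i) b /\ supp x a /\ supp x b) /\
  (forall k, F = Some k ->
     (exists a, is_min (I k) a /\ supp x a) /\
     (exists v, is_sup_nat (I k) v /\ is_sup_nat (supp x) v)).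

(* Let two norming blocks I_i and L_j cross, I_i starting first and L_j ending last,
   and let a, b, c be the sums of x over I_i \ L_j, I_i /\ L_j and L_j \ I_i.
   A block of a norming family cannot be split profitably, so ab >= 0 and bc >= 0.
   Replacing I_i by I_i \/ L_j in the first family up to i and continuing with the
   second family after j, and symmetrically with I_i /\ L_j, gives two admissible
   families whose values add up to at most twice ||x||_J^2; hence
   (a+b+c)^2 + b^2 <= (a+b)^2 + (b+c)^2, i.e. ac <= 0.  Finally a, b, c are nonzero:
   each is the sum over an end piece of a block containing a point of the support
   (block endpoints of a norming partition lie in the support), and a zero-sum such
   piece could be cut into two pieces with opposite nonzero sums, increasing the
   norm.  So a and c have the sign of b, contradicting ac <= 0. *)

From Stdlib Require Import Reals Lra Lia List ClassicalEpsilon Classical.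
From Coquelicot Require Import Coquelicot.
Import ListNotations.
Open Scope R_scope.

Definition ind (x : nat -> R) (P : nat -> Prop) (k : nat) : R :=
  if excluded_middle_informative (P k) then x k else 0.

Definition cut_le (P : nat -> Prop) (t n : nat) : Prop := P n /\ (n <= t)%nat.
Definition cut_gt (P : nat -> Prop) (t n : nat) : Prop := P n /\ (t < n)%nat.

Lemma is_series_finite_support (a : nat -> R) t :
  (forall k, (t < k)%nat -> a k = 0) -> is_series a (sum_n a t).
Proof.
  intros H. apply filterlim_ext_loc with (fun _ => sum_n a t); [|apply filterlim_const].
  exists t. intros n Hn. induction Hn as [|n Hn IH]; [reflexivity|].
  rewrite sum_Sn, (H (S n)) by lia. unfold plus; simpl. rewrite Rplus_0_r. exact IH.
Qed.

Lemma is_series_ind_empty x P : (forall n, ~ P n) -> is_series (ind x P) 0.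
Proof.
  intros H. replace 0 with (sum_n (ind x P) 0).
  - apply is_series_finite_support. intros k _. unfold ind.
    destruct excluded_middle_informative; firstorder.
  - rewrite sum_O. unfold ind. destruct excluded_middle_informative; firstorder.
Qed.

Lemma ind_union x P Q U : (forall n, U n <-> P n \/ Q n) -> (forall n, P n -> Q n -> False) ->
  forall k, ind x U k = ind x P k + ind x Q k.
Proof.
  intros H1 H2 k. unfold ind.
  destruct (excluded_middle_informative (P k)), (excluded_middle_informative (Q k)),
    (excluded_middle_informative (U k)); firstorder; lra.
Qed.

Lemma isum_union x P Q U : (forall n, U n <-> P n \/ Q n) -> (forall n, P n -> Q n -> False) ->
  ex_series (ind x P) -> ex_series (ind x Q) -> isum x U = isum x P + isum x Q.
Proof.
  intros H1 H2 E1 E2. unfold isum. rewrite <- Series_plus by assumption.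
  apply Series_ext, (ind_union x P Q U H1 H2).
Qed.

Lemma ind_cut_le_eq x P t k : (k <= t)%nat -> ind x (cut_le P t) k = ind x P k.
Proof.
  intros Hk. unfold ind, cut_le.
  destruct (excluded_middle_informative (P k /\ (k <= t)%nat)),
    (excluded_middle_informative (P k)); tauto.
Qed.

Lemma is_series_cut_le x P t : is_series (ind x (cut_le P t)) (sum_n (ind x P) t).
Proof.
  rewrite <- (sum_n_ext_loc (ind x (cut_le P t))) by (intros; apply ind_cut_le_eq; lia).
  apply is_series_finite_support. intros k Hk. unfold ind, cut_le.
  destruct excluded_middle_informative as [[_ h]|]; [lia|reflexivity].
Qed.

Lemma isum_cut x P t : ex_series (ind x P) ->
  isum x P = isum x (cut_le P t) + isum x (cut_gt P t).
Proof.
  intros E.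
  assert (Hsplit : forall n, P n <-> cut_le P t n \/ cut_gt P t n)
    by (intros n; unfold cut_le, cut_gt; destruct (Nat.le_gt_cases n t); intuition lia).
  assert (Hdisj : forall n, cut_le P t n -> cut_gt P t n -> False)
    by (intros n [_ h1] [_ h2]; lia).
  assert (Elo : ex_series (ind x (cut_le P t))) by (eexists; apply is_series_cut_le).
  assert (Ehi : ex_series (ind x (cut_gt P t))).
  { apply (ex_series_ext (fun k => plus (ind x P k) (opp (ind x (cut_le P t) k)))).
    - intros k. rewrite (ind_union x _ _ P Hsplit Hdisj k). unfold plus, opp; simpl. ring.
    - exact (ex_series_minus _ _ E Elo). }
  apply isum_union; assumption.
Qed.

(* Cut at [e] if the partial sum [S_e] is nonzero, else at [e - 1]: [S_(e-1) = - x e]. *)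
Lemma isum_zero_split x P e : ex_series (ind x P) -> isum x P = 0 -> P e -> x e <> 0 ->
  exists t d, d <> 0 /\ isum x (cut_le P t) = d /\ isum x (cut_gt P t) = - d.
Proof.
  intros E H0 Pe xe.
  assert (Hcut : forall t, isum x (cut_le P t) = sum_n (ind x P) t /\
                           isum x (cut_gt P t) = - sum_n (ind x P) t).
  { intros t. pose proof (isum_cut x P t E) as Ht.
    assert (Hlo : isum x (cut_le P t) = sum_n (ind x P) t)
      by (apply is_series_unique, is_series_cut_le).
    split; lra. }
  assert (Hxe : ind x P e = x e) by (unfold ind; destruct excluded_middle_informative; tauto).
  destruct (Req_dec (sum_n (ind x P) e) 0) as [h|h].
  - destruct e as [|e].
    + rewrite sum_O in h. congruence.
    + exists e, (- x (S e)). rewrite sum_Sn, Hxe in h. unfold plus in h; simpl in h.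
      destruct (Hcut e) as [-> ->]. repeat split; lra.
  - exists e, (sum_n (ind x P) e). destruct (Hcut e) as [-> ->]. auto.
Qed.

(* A possibly empty interval: [is_interval P] is convertible to [(exists n, P n) /\ block P]. *)
Definition block (P : nat -> Prop) : Prop :=
  (forall n, P n -> (1 <= n)%nat) /\
  (forall a b c, P a -> P c -> (a <= b)%nat -> (b <= c)%nat -> P b).

Lemma block_ex_series x P : in_J x -> block P -> ex_series (ind x P).
Proof.
  intros [HJ _] HP. destruct (classic (exists n, P n)) as [Hne|Hempty].
  - exact (HJ P (conj Hne HP)).
  - exists 0. apply is_series_ind_empty. intros n Pn. eauto.
Qed.

Lemma isum_union_blocks x P Z Y : in_J x -> block Z -> block Y ->
  (forall n, P n <-> Z n \/ Y n) -> (forall n, Z n -> Y n -> False) ->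
  isum x P = isum x Z + isum x Y.
Proof. intros HJ HZ HY H1 H2. apply isum_union; auto; apply block_ex_series; auto. Qed.

Lemma block_cut_le P t : block P -> block (cut_le P t).
Proof.
  intros [h1 h2]. split; [intros n [hn _]; auto|].
  intros a b c [ha _] [hc hc'] hab hbc. split; [apply (h2 a b c)|]; auto; lia.
Qed.

Lemma block_cut_gt P t : block P -> block (cut_gt P t).
Proof.
  intros [h1 h2]. split; [intros n [hn _]; auto|].
  intros a b c [ha ha'] [hc _] hab hbc. split; [apply (h2 a b c)|]; auto; lia.
Qed.

Lemma block_inter P Q : block P -> block Q -> block (fun n => P n /\ Q n).
Proof.
  intros [hP cP] [hQ cQ]. split; [intros n [hn _]; auto|].
  intros a b c [ha ha'] [hc hc'] hab hbc. split; [apply (cP a b c) | apply (cQ a b c)]; auto.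
Qed.

Lemma block_union P Q z : block P -> block Q -> P z -> Q z -> block (fun n => P n \/ Q n).
Proof.
  intros [hP cP] [hQ cQ] Pz Qz. split; [intros n [hn|hn]; auto|].
  intros a b c ha hc hab hbc. destruct (Nat.le_gt_cases b z) as [hbz|hzb].
  - destruct ha as [ha|ha]; [left; apply (cP a b z) | right; apply (cQ a b z)]; auto.
  - destruct hc as [hc|hc]; [left; apply (cP z b c) | right; apply (cQ z b c)]; auto; lia.
Qed.

Definition before (A B : nat -> Prop) : Prop := forall a b, A a -> B b -> (a < b)%nat.

Definition left_part (P Q : nat -> Prop) (n : nat) : Prop := P n /\ forall k, Q k -> (n < k)%nat.
Definition right_part (P Q : nat -> Prop) (n : nat) : Prop := P n /\ forall k, Q k -> (k < n)%nat.

Lemma block_left_part P Q : block P -> block (left_part P Q).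
Proof.
  intros [hP cP]. split; [intros n [hn _]; auto|].
  intros a b c [ha _] [hc hc'] hab hbc. split; [apply (cP a b c); auto|].
  intros k hk. specialize (hc' k hk). lia.
Qed.

Lemma block_right_part P Q : block P -> block (right_part P Q).
Proof.
  intros [hP cP]. split; [intros n [hn _]; auto|].
  intros a b c [ha ha'] [hc _] hab hbc. split; [apply (cP a b c); auto|].
  intros k hk. specialize (ha' k hk). lia.
Qed.

Notation ordered := (ForallOrdPairs before).

Fixpoint sqsum (x : nat -> R) (l : list (nat -> Prop)) : R :=
  match l with [] => 0 | A :: l' => (isum x A)^2 + sqsum x l' end.

Lemma sqsum_app x l1 l2 : sqsum x (l1 ++ l2) = sqsum x l1 + sqsum x l2.
Proof. induction l1 as [|A l1 IH]; simpl; [|rewrite IH]; lra. Qed.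

Lemma ordered_app l1 l2 : ordered l1 -> ordered l2 ->
  (forall A B, In A l1 -> In B l2 -> before A B) -> ordered (l1 ++ l2).
Proof.
  induction l1 as [|A l1 IH]; intros h1 h2 h3; simpl; auto.
  inversion h1 as [|? ? hF ho]; subst. constructor.
  - apply List.Forall_app. split; auto. apply List.Forall_forall. intros B HB. apply h3; simpl; auto.
  - apply IH; auto. intros C D HC HD. apply h3; simpl; auto.
Qed.

Lemma ordered_nth l d i j : ordered l -> (i < j < length l)%nat -> before (nth i l d) (nth j l d).
Proof.
  revert i j. induction l as [|A l IH]; intros i j Ho Hij; simpl in *; [lia|].
  inversion Ho as [|? ? HF Ho']; subst. destruct i, j; try lia.
  - rewrite List.Forall_forall in HF. apply HF, nth_In. lia.
  - apply IH; auto. lia.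
Qed.

Definition Jsq (x : nat -> R) : R := real (Lub_Rbar (J_values x)).

Lemma J_values_0 x : J_values x 0.
Proof. exists 0%nat, (fun _ _ => False). repeat split; intros; lia. Qed.

Lemma J_values_le_Jsq x s : in_J x -> J_values x s -> s <= Jsq x.
Proof.
  intros [_ [M HM]] Hs. unfold Jsq. destruct (Lub_Rbar_correct (J_values x)) as [Hub Hlub].
  assert (HleM : Rbar_le (Lub_Rbar (J_values x)) M) by (apply Hlub; intros r Hr; apply HM, Hr).
  pose proof (Hub s Hs) as Hs'. pose proof (Hub 0 (J_values_0 x)) as H0.
  destruct (Lub_Rbar (J_values x)); simpl in *; tauto.
Qed.

Lemma Jsq_nonneg x : in_J x -> 0 <= Jsq x.
Proof. intros HJ. exact (J_values_le_Jsq x 0 HJ (J_values_0 x)). Qed.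

Lemma rsum_shift f n : rsum f (S n) = f 0%nat + rsum (fun i => f (S i)) n.
Proof. induction n; simpl in *; lra. Qed.

Lemma rsum_nth x l d : rsum (fun i => (isum x (nth i l d))^2) (length l) = sqsum x l.
Proof.
  induction l as [|A l IH]; [reflexivity|].
  simpl length. rewrite rsum_shift. cbn [sqsum]. rewrite <- IH. reflexivity.
Qed.

Lemma ordered_drop_empty x l : List.Forall block l -> ordered l ->
  exists l', List.Forall is_interval l' /\ ordered l' /\ sqsum x l' = sqsum x l /\ incl l' l.
Proof.
  induction l as [|A l IH]; intros Hb Ho.
  - exists []. repeat split; auto. apply incl_refl.
  - inversion Hb as [|? ? HA Hb']; inversion Ho as [|? ? HF Ho']; subst.
    destruct (IH Hb' Ho') as [l' [Hi' [Ho'' [Hs' Hinc]]]].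
    destruct (classic (exists n, A n)) as [Hne|Hempty].
    + exists (A :: l'). repeat split.
      * constructor; auto. exact (conj Hne HA).
      * constructor; auto. rewrite List.Forall_forall in *. intros B HB. apply HF, Hinc, HB.
      * simpl. rewrite Hs'. reflexivity.
      * apply incl_cons; [left; auto|]. apply incl_tl, Hinc.
    + exists l'. repeat split; auto; [|apply incl_tl, Hinc].
      assert (H0 : isum x A = 0) by (apply is_series_unique, is_series_ind_empty; firstorder).
      simpl. rewrite H0, Hs'. lra.
Qed.

Lemma sqsum_le_Jsq x l : in_J x -> List.Forall block l -> ordered l -> sqsum x l <= Jsq x.
Proof.
  intros HJ Hb Ho. destruct (ordered_drop_empty x l Hb Ho) as [l' [Hi [Ho' [Hs _]]]]. rewrite <- Hs.
  apply J_values_le_Jsq; auto.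
  exists (length l'), (fun i => nth (pred i) l' (fun _ => False)). split; [|split].
  - intros i Hi'. rewrite List.Forall_forall in Hi. apply Hi, nth_In. lia.
  - intros i j Hi' Hj' Hij k Hk1 Hk2. destruct (Nat.lt_total i j) as [h|[h|h]]; [|lia|].
    + pose proof (ordered_nth l' (fun _ => False) (pred i) (pred j) Ho' ltac:(lia) k k Hk1 Hk2). lia.
    + pose proof (ordered_nth l' (fun _ => False) (pred j) (pred i) Ho' ltac:(lia) k k Hk2 Hk1). lia.
  - rewrite <- (rsum_nth x l' (fun _ => False)). reflexivity.
Qed.

Lemma in_F_le F i k : in_F F i -> (1 <= k <= i)%nat -> in_F F k.
Proof. unfold in_F. destruct F; intros; intuition lia. Qed.

Lemma family_block F I k : is_family F I -> in_F F k -> block (I k).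
Proof. intros [_ [H _]] Hk. exact (proj2 (H k Hk)). Qed.

Lemma family_before F I a b : is_family F I -> in_F F b -> (1 <= a < b)%nat -> before (I a) (I b).
Proof.
  intros Hf. pose proof Hf as [_ [Hint Hnext]].
  induction b as [|b IH]; intros Hb Hab; [lia|].
  assert (Hb' : in_F F b) by (apply (in_F_le F (S b)); [auto|lia]).
  intros p q hp hq. destruct (Nat.eq_dec a b) as [->|Hne].
  - exact (Hnext b Hb' Hb p q hp hq).
  - destruct (Hint b Hb') as [[c Hc] _].
    pose proof (IH Hb' ltac:(lia) p c hp Hc). pose proof (Hnext b Hb' Hb c q Hc hq). lia.
Qed.

Lemma In_map_seq (I : nat -> nat -> Prop) s n A :
  In A (map I (seq s n)) -> exists k, (s <= k < s + n)%nat /\ A = I k.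
Proof. intros H. apply in_map_iff in H as [k [<- Hk]]. apply in_seq in Hk. eauto. Qed.

Lemma family_seq F I s n : is_family F I -> (1 <= s)%nat ->
  (forall k, (s <= k < s + n)%nat -> in_F F k) ->
  ordered (map I (seq s n)) /\ List.Forall block (map I (seq s n)).
Proof.
  intros Hf. revert s. induction n as [|n IH]; intros s Hs Hn; [split; constructor|].
  destruct (IH (S s) ltac:(lia)) as [Ho Hb]; [intros k Hk; apply Hn; lia|].
  simpl. split; constructor; auto.
  - apply List.Forall_forall. intros B HB. apply In_map_seq in HB as [k [Hk ->]].
    apply (family_before F); [|apply Hn|]; auto; lia.
  - apply (family_block F); [|apply Hn]; auto; lia.
Qed.

Definition pre (I : nat -> nat -> Prop) (i : nat) := map I (seq 1 (pred i)).
Definition post (I : nat -> nat -> Prop) (i T : nat) := map I (seq (S i) (T - i)).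

Definition after_prefix (F : option nat) (I : nat -> nat -> Prop) (i : nat) (Z : nat -> Prop) :=
  forall k, in_F F k -> (k < i)%nat -> before (I k) Z.
Definition before_suffix (F : option nat) (I : nat -> nat -> Prop) (i : nat) (Z : nat -> Prop) :=
  forall k, in_F F k -> (i < k)%nat -> before Z (I k).

Lemma sandwich_le x F I G L i j T Zs : in_J x -> is_family F I -> is_family G L ->
  in_F F i -> in_F G T -> (j <= T)%nat ->
  (forall k l, in_F F k -> (k < i)%nat -> in_F G l -> (j < l)%nat -> before (I k) (L l)) ->
  List.Forall block Zs -> ordered Zs ->
  (forall Z, In Z Zs -> after_prefix F I i Z /\ before_suffix G L j Z) ->
  sqsum x (pre I i) + sqsum x Zs + sqsum x (post L j T) <= Jsq x.
Proof.
  intros HJ HfI HfL Hi HT HjT Hcross Hb Ho HZ.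
  destruct (family_seq F I 1 (pred i) HfI (le_n 1)) as [Hopre Hbpre].
  { intros k Hk. apply (in_F_le F i); auto; lia. }
  destruct (family_seq G L (S j) (T - j) HfL ltac:(lia)) as [Hopost Hbpost].
  { intros l Hl. apply (in_F_le G T); auto; lia. }
  assert (Hk : forall A, In A (pre I i) -> exists k, in_F F k /\ (k < i)%nat /\ A = I k).
  { intros A HA. apply In_map_seq in HA as [k [h ->]]. exists k.
    split; [apply (in_F_le F i); auto; lia | split; [lia | reflexivity]]. }
  assert (Hl : forall B, In B (post L j T) -> exists l, in_F G l /\ (j < l)%nat /\ B = L l).
  { intros B HB. apply In_map_seq in HB as [l [h ->]]. exists l.
    split; [apply (in_F_le G T); auto; lia | split; [lia | reflexivity]]. }
  enough (Hbound : sqsum x (pre I i ++ Zs ++ post L j T) <= Jsq x)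
    by (rewrite !sqsum_app in Hbound; lra).
  apply sqsum_le_Jsq; auto.
  - repeat (apply List.Forall_app; split); auto.
  - apply ordered_app; [auto|apply ordered_app; auto|].
    + intros A B HA HB. destruct (Hl B HB) as [l [? [? ->]]]. apply (HZ A HA); auto.
    + intros A B HA HB. destruct (Hk A HA) as [k [? [? ->]]].
      apply in_app_or in HB as [HB|HB].
      * apply (HZ B HB); auto.
      * destruct (Hl B HB) as [l [? [? ->]]]. auto.
Qed.

Lemma sqsum_nonneg x l : 0 <= sqsum x l.
Proof. induction l as [|A l IH]; simpl; [lra|]. pose proof (pow2_ge_0 (isum x A)). lra. Qed.

Lemma rsum_sqsum x I T : rsum (fun t => (isum x (I (S t)))^2) T = sqsum x (map I (seq 1 T)).
Proof.
  induction T as [|T IH]; [reflexivity|].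
  rewrite seq_S, map_app, sqsum_app, <- IH. cbn [rsum map sqsum].
  replace (1 + T)%nat with (S T) by lia. lra.
Qed.

Lemma rsum_split x I i T : (1 <= i <= T)%nat ->
  rsum (fun t => (isum x (I (S t)))^2) T =
  sqsum x (pre I i) + (isum x (I i))^2 + sqsum x (post I i T).
Proof.
  intros H. rewrite rsum_sqsum. unfold pre, post.
  replace T with (pred i + S (T - i))%nat at 1 by lia.
  rewrite seq_app, map_app, sqsum_app. replace (1 + pred i)%nat with i by lia.
  simpl. lra.
Qed.

Lemma sum_n_rsum (a : nat -> R) n : sum_n a n = rsum a (S n).
Proof.
  induction n as [|n IH]; [rewrite sum_O; simpl; lra|].
  rewrite sum_Sn, IH. reflexivity.
Qed.

Lemma norming_approx x F I i eps : in_J x -> norming x F I -> in_F F i -> 0 < eps ->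
  exists T, (i <= T)%nat /\ in_F F T /\
    Jsq x - eps < sqsum x (pre I i) + (isum x (I i))^2 + sqsum x (post I i T).
Proof.
  intros HJ [Hf Hn] Hi He. unfold family_norm, J_norm in Hn. fold (Jsq x) in Hn.
  pose proof (Jsq_nonneg x HJ) as HJ0.
  destruct F as [k|].
  - exists k. destruct Hi as [Hi1 Hi2]. split; [auto|split; [split; simpl; lia|]].
    rewrite <- rsum_split by lia.
    apply sqrt_inj in Hn; [lra| |auto]. rewrite rsum_sqsum. apply sqsum_nonneg.
  - set (a := fun t => (isum x (I (S t)))^2) in *.
    assert (Hpart : forall n, sum_n a n = sqsum x (map I (seq 1 (S n))))
      by (intros n; rewrite sum_n_rsum; apply rsum_sqsum).
    assert (Hbound : forall n, sum_n a n <= Jsq x).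
    { intros n. rewrite Hpart.
      destruct (family_seq None I 1 (S n) Hf (le_n 1)) as [Ho Hb]; [now split|].
      apply sqsum_le_Jsq; auto. }
    assert (Hincr : forall n, sum_n a n <= sum_n a (S n)).
    { intros n. rewrite sum_Sn. unfold plus; simpl.
      pose proof (pow2_ge_0 (isum x (I (S (S n))))). unfold a. lra. }
    destruct (ex_finite_lim_seq_incr (sum_n a) (Jsq x) Hincr Hbound) as [l Hl].
    assert (Hl0 : 0 <= l).
    { apply (is_lim_seq_le (fun _ => 0) (sum_n a) 0 l); [|apply is_lim_seq_const|exact Hl].
      intros n. rewrite Hpart. apply sqsum_nonneg. }
    rewrite (is_series_unique a l Hl) in Hn. apply sqrt_inj in Hn; auto. subst l.
    apply is_lim_seq_spec in Hl. destruct (Hl (mkposreal eps He)) as [N HN].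
    exists (S (Nat.max N i)). split; [lia|split; [split; [lia|exact Logic.I]|]].
    specialize (HN (Nat.max N i) ltac:(lia)). simpl in HN. apply Rabs_def2 in HN.
    rewrite sum_n_rsum in HN. unfold a in HN. rewrite (rsum_split x I i) in HN by (destruct Hi; lia).
    lra.
Qed.

Lemma norming_refine_le x F I i Zs : in_J x -> norming x F I -> in_F F i ->
  List.Forall block Zs -> ordered Zs -> (forall Z, In Z Zs -> forall n, Z n -> I i n) ->
  sqsum x Zs <= (isum x (I i))^2.
Proof.
  intros HJ Hn Hi Hb Ho Hsub. apply Rle_plus_epsilon. intros eps He.
  destruct (norming_approx x F I i eps HJ Hn Hi He) as [T [HiT [HT Happ]]].
  destruct Hn as [Hf _].
  enough (sqsum x (pre I i) + sqsum x Zs + sqsum x (post I i T) <= Jsq x) by lra.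
  apply (sandwich_le x F I F I); auto.
  - intros k l Hk Hki Hl Hil. apply (family_before F); auto. destruct Hk; lia.
  - intros Z HZ. split.
    + intros k Hk Hki a b Ha Hb'. apply (family_before F I k i Hf Hi); [destruct Hk; lia|auto|].
      apply (Hsub Z HZ b Hb').
    + intros k Hk Hik a b Ha Hb'. apply (family_before F I i k Hf Hk); [destruct Hi; lia| |auto].
      apply (Hsub Z HZ a Ha).
Qed.

Lemma norming_exchange_le x F I G L i j z U B : in_J x -> norming x F I -> norming x G L ->
  in_F F i -> in_F G j -> I i z -> L j z -> block U -> block B ->
  after_prefix F I i U -> before_suffix G L j U ->
  after_prefix G L j B -> before_suffix F I i B ->
  (isum x U)^2 + (isum x B)^2 <= (isum x (I i))^2 + (isum x (L j))^2.
Proof.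
  intros HJ HnI HnL Hi Hj Iz Lz HU HB HU1 HU2 HB1 HB2. apply Rle_plus_epsilon. intros eps He.
  destruct (norming_approx x F I i (eps/2) HJ HnI Hi ltac:(lra)) as [T1 [HiT1 [HT1 Happ1]]].
  destruct (norming_approx x G L j (eps/2) HJ HnL Hj ltac:(lra)) as [T2 [HiT2 [HT2 Happ2]]].
  destruct HnI as [HfI _], HnL as [HfL _].
  assert (H1 : sqsum x (pre I i) + sqsum x [U] + sqsum x (post L j T2) <= Jsq x).
  { apply (sandwich_le x F I G L); auto.
    - intros k l Hk Hki Hl Hjl a b Ha Hb.
      pose proof (family_before F I k i HfI Hi ltac:(destruct Hk; lia) a z Ha Iz).
      pose proof (family_before G L j l HfL Hl ltac:(destruct Hj; lia) z b Lz Hb). lia.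
    - repeat constructor.
    - intros Z [<-|[]]. auto. }
  assert (H2 : sqsum x (pre L j) + sqsum x [B] + sqsum x (post I i T1) <= Jsq x).
  { apply (sandwich_le x G L F I); auto.
    - intros l k Hl Hlj Hk Hik a b Ha Hb.
      pose proof (family_before G L l j HfL Hj ltac:(destruct Hl; lia) a z Ha Lz).
      pose proof (family_before F I i k HfI Hk ltac:(destruct Hi; lia) z b Iz Hb). lia.
    - repeat constructor.
    - intros Z [<-|[]]. auto. }
  simpl in H1, H2. lra.
Qed.

Lemma partition_supp_below x F I i n : norming_partition x F I -> in_F F i -> I i n ->
  exists e, I i e /\ (e <= n)%nat /\ supp x e.
Proof.
  intros [_ [Hmid Hlast]] Hi Hn.
  assert (Hmin : exists p, is_min (I i) p /\ supp x p).
  { destruct F as [k|]; [destruct (Nat.lt_ge_cases i k) as [h|h]|].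
    - destruct (Hmid i Hi h) as [a [b [ha [_ [sa _]]]]]. eauto.
    - replace i with k by (destruct Hi; lia). exact (proj1 (Hlast k eq_refl)).
    - destruct (Hmid i Hi Logic.I) as [a [b [ha [_ [sa _]]]]]. eauto. }
  destruct Hmin as [p [[Ip pmin] sp]]. eauto.
Qed.

Lemma partition_supp_above x F I i n : norming_partition x F I -> in_F F i -> I i n ->
  exists e, I i e /\ (n <= e)%nat /\ supp x e.
Proof.
  intros [[Hf _] [Hmid Hlast]] Hi Hn.
  assert (Hmax : (exists q, is_max (I i) q /\ supp x q) \/
                 (is_sup_nat (I i) None /\ is_sup_nat (supp x) None)).
  { destruct F as [k|]; [destruct (Nat.lt_ge_cases i k) as [h|h]|].
    - destruct (Hmid i Hi h) as [a [b [_ [hb [_ sb]]]]]. eauto.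
    - replace i with k by (destruct Hi; lia).
      destruct (Hlast k eq_refl) as [_ [[q|] [Hq Hs]]]; [left; exists q; split; [|apply Hs]|right]; auto.
    - destruct (Hmid i Hi Logic.I) as [a [b [_ [hb [_ sb]]]]]. eauto. }
  destruct Hmax as [[q [[Iq qmax] sq]] | [Hunb Hsupp]]; [eauto|].
  destruct (Hsupp n) as [e [se ne]]. destruct (Hunb e) as [e' [Ie' ee']].
  exists e. split; [|split; [lia|auto]].
  apply (proj2 (family_block F I i Hf Hi) n e e'); auto; lia.
Qed.

Lemma norming_split_sign x F I i Z Y : in_J x -> norming x F I -> in_F F i ->
  block Z -> block Y -> before Z Y -> (forall n, I i n <-> Z n \/ Y n) ->
  0 <= isum x Z * isum x Y.
Proof.
  intros HJ Hn Hi HZ HY HZY Hsplit.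
  assert (Hsum : isum x (I i) = isum x Z + isum x Y).
  { apply isum_union_blocks; auto. intros n hz hy. pose proof (HZY n n hz hy). lia. }
  assert (H : sqsum x [Z; Y] <= (isum x (I i))^2).
  { apply (norming_refine_le x F I i); auto.
    - repeat constructor; auto.
    - intros W [<-|[<-|[]]] n hn; apply Hsplit; auto. }
  simpl in H. rewrite Hsum in H. nra.
Qed.

Lemma norming_end_piece_neq0 x F I i Z Y e : in_J x -> norming x F I -> in_F F i ->
  block Z -> block Y -> (before Z Y \/ before Y Z) -> (forall n, I i n <-> Z n \/ Y n) ->
  Z e -> x e <> 0 -> isum x Z <> 0.
Proof.
  intros HJ Hn Hi HZ HY Hord Hsplit Ze xe Hz0.
  assert (Hsum : isum x (I i) = isum x Y).
  { rewrite (isum_union_blocks x (I i) Z Y); auto; [lra|].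
    intros n hz hy. destruct Hord as [h|h]; [pose proof (h n n hz hy) | pose proof (h n n hy hz)]; lia. }
  destruct (isum_zero_split x Z e (block_ex_series x Z HJ HZ) Hz0 Ze xe) as [t [d [Hd [Hlo Hhi]]]].
  assert (HZ12 : before (cut_le Z t) (cut_gt Z t)) by (intros a b [_ ha] [_ hb]; lia).
  assert (Hb1 := block_cut_le Z t HZ). assert (Hb2 := block_cut_gt Z t HZ).
  assert (Hsub1 : forall n, cut_le Z t n -> I i n) by (intros n [hn _]; apply Hsplit; auto).
  assert (Hsub2 : forall n, cut_gt Z t n -> I i n) by (intros n [hn _]; apply Hsplit; auto).
  assert (HsubY : forall n, Y n -> I i n) by (intros n hn; apply Hsplit; auto).
  assert (H : d^2 + d^2 + (isum x Y)^2 <= (isum x Y)^2).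
  { rewrite <- Hsum at 2. destruct Hord as [HZY|HYZ].
    - replace (d^2 + d^2 + (isum x Y)^2) with (sqsum x [cut_le Z t; cut_gt Z t; Y])
        by (simpl; rewrite Hlo, Hhi; ring).
      apply (norming_refine_le x F I i); auto.
      + repeat constructor; auto; intros a b [ha _] hb; apply HZY; auto.
      + intros W [<-|[<-|[<-|[]]]]; auto.
    - replace (d^2 + d^2 + (isum x Y)^2) with (sqsum x [Y; cut_le Z t; cut_gt Z t])
        by (simpl; rewrite Hlo, Hhi; ring).
      apply (norming_refine_le x F I i); auto.
      + repeat constructor; auto; intros a b ha [hb _]; apply HYZ; auto.
      + intros W [<-|[<-|[<-|[]]]]; auto. }
  nra.
Qed.

Section Crossing.

Variables (x : nat -> R) (F G : option nat) (I L : nat -> nat -> Prop) (i j u z w : nat).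
Hypotheses (HJ : in_J x) (HI : norming_partition x F I) (HL : norming_partition x G L)
  (Hi : in_F F i) (Hj : in_F G j)
  (Iu : I i u) (Lu : ~ L j u) (Iz : I i z) (Lz : L j z) (Lw : L j w) (Iw : ~ I i w)
  (uz : (u < z)%nat) (zw : (z < w)%nat).

Let HnI : norming x F I := proj1 HI.
Let HnL : norming x G L := proj1 HL.
Let HfI : is_family F I := proj1 HnI.
Let HfL : is_family G L := proj1 HnL.
Let block_I : block (I i) := family_block F I i HfI Hi.
Let block_L : block (L j) := family_block G L j HfL Hj.

Let A := left_part (I i) (L j).
Let B n := I i n /\ L j n.
Let C := right_part (L j) (I i).

Lemma crossing_I_lt_w n : I i n -> (n < w)%nat.
Proof.
  intros In. destruct (Nat.lt_ge_cases n w) as [h|h]; auto.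
  exfalso. apply Iw, (proj2 block_I z w n); auto; lia.
Qed.

Lemma crossing_u_lt_L n : L j n -> (u < n)%nat.
Proof.
  intros Ln. destruct (Nat.lt_ge_cases u n) as [h|h]; auto.
  exfalso. apply Lu, (proj2 block_L n u z); auto; lia.
Qed.

Lemma crossing_split_I n : I i n <-> A n \/ B n.
Proof.
  split; [|intros [[h _]|[h _]]; auto].
  intros In. destruct (classic (L j n)) as [Ln|Ln]; [right; split; auto|left; split; auto].
  intros k Lk. destruct (Nat.lt_ge_cases n k) as [h|h]; auto.
  exfalso. apply Ln, (proj2 block_L k n w); auto.
  pose proof (crossing_I_lt_w n In). lia.
Qed.

Lemma crossing_split_L n : L j n <-> B n \/ C n.
Proof.
  split; [|intros [[_ h]|[h _]]; auto].
  intros Ln. destruct (classic (I i n)) as [In|In]; [left; split; auto|right; split; auto].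
  intros k Ik. destruct (Nat.lt_ge_cases k n) as [h|h]; auto.
  exfalso. apply In, (proj2 block_I u n k); auto.
  pose proof (crossing_u_lt_L n Ln). lia.
Qed.

Let block_A : block A := block_left_part (I i) (L j) block_I.
Let block_B : block B := block_inter (I i) (L j) block_I block_L.
Let block_C : block C := block_right_part (L j) (I i) block_L.

Lemma crossing_A_before_B : before A B.
Proof. intros a b [_ ha] [_ hb]. auto. Qed.

Lemma crossing_B_before_C : before B C.
Proof. intros a b [ha _] [_ hb]. auto. Qed.

Lemma crossing_isum_I : isum x (I i) = isum x A + isum x B.
Proof.
  apply isum_union_blocks; auto using crossing_split_I.
  intros n ha hb. pose proof (crossing_A_before_B n n ha hb). lia.
Qed.

Lemma crossing_isum_L : isum x (L j) = isum x B + isum x C.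
Proof.
  apply isum_union_blocks; auto using crossing_split_L.
  intros n hb hc. pose proof (crossing_B_before_C n n hb hc). lia.
Qed.

Lemma crossing_isum_union : isum x (fun n => I i n \/ L j n) = isum x A + isum x B + isum x C.
Proof.
  rewrite Rplus_assoc, <- crossing_isum_L. apply isum_union_blocks; auto.
  - intros n. rewrite crossing_split_I. unfold B. tauto.
  - intros n [_ ha] Ln. specialize (ha n Ln). lia.
Qed.

Lemma crossing_exchange :
  (isum x A + isum x B + isum x C)^2 + (isum x B)^2 <=
  (isum x A + isum x B)^2 + (isum x B + isum x C)^2.
Proof.
  rewrite <- crossing_isum_union, <- crossing_isum_I, <- crossing_isum_L.
  apply (norming_exchange_le x F I G L i j z); auto.
  - exact (block_union (I i) (L j) z block_I block_L Iz Lz).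
  - intros k Hk Hki a b Ha [Ib|Lb]; [apply (family_before F I k i HfI Hi); auto; destruct Hk; lia|].
    pose proof (family_before F I k i HfI Hi ltac:(destruct Hk; lia) a u Ha Iu).
    pose proof (crossing_u_lt_L b Lb). lia.
  - intros l Hl Hjl a b [Ia|La] Hb; [|apply (family_before G L j l HfL Hl); auto; destruct Hj; lia].
    pose proof (family_before G L j l HfL Hl ltac:(destruct Hj; lia) w b Lw Hb).
    pose proof (crossing_I_lt_w a Ia). lia.
  - intros l Hl Hlj a b Ha [_ Lb]. apply (family_before G L l j HfL Hj); auto. destruct Hl; lia.
  - intros k Hk Hik a b [Ia _] Hb. apply (family_before F I i k HfI Hk); auto. destruct Hi; lia.
Qed.

Lemma crossing_isum_A_neq0 : isum x A <> 0.
Proof.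
  destruct (partition_supp_below x F I i u HI Hi Iu) as [e [Ie [eu [_ xe]]]].
  apply (norming_end_piece_neq0 x F I i A B e); auto using crossing_split_I, crossing_A_before_B.
  split; auto. intros k Lk. pose proof (crossing_u_lt_L k Lk). lia.
Qed.

Lemma crossing_isum_B_neq0 : isum x B <> 0.
Proof.
  destruct (partition_supp_below x G L j z HL Hj Lz) as [e [Le [ez [_ xe]]]].
  apply (norming_end_piece_neq0 x F I i B A e); auto using crossing_A_before_B.
  - intros n. rewrite crossing_split_I. tauto.
  - split; auto. apply (proj2 block_I u e z); auto. pose proof (crossing_u_lt_L e Le). lia.
Qed.

Lemma crossing_isum_C_neq0 : isum x C <> 0.
Proof.
  destruct (partition_supp_above x G L j w HL Hj Lw) as [e [Le [we [_ xe]]]].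
  apply (norming_end_piece_neq0 x G L j C B e); auto using crossing_B_before_C.
  - intros n. rewrite crossing_split_L. tauto.
  - split; auto. intros k Ik. pose proof (crossing_I_lt_w k Ik). lia.
Qed.

Lemma no_crossing : False.
Proof.
  pose proof (norming_split_sign x F I i A B HJ HnI Hi block_A block_B
    crossing_A_before_B crossing_split_I) as Hab.
  pose proof (norming_split_sign x G L j B C HJ HnL Hj block_B block_C
    crossing_B_before_C crossing_split_L) as Hbc.
  pose proof crossing_exchange as Hac.
  pose proof crossing_isum_A_neq0. pose proof crossing_isum_B_neq0. pose proof crossing_isum_C_neq0.
  set (a := isum x A) in *. set (b := isum x B) in *. set (c := isum x C) in *.
  assert (0 < b^2) by (apply pow2_gt_0; auto).
  assert (0 < (a * c)^2) by (apply pow2_gt_0, Rmult_integral_contrapositive; auto).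
  nra.
Qed.

End Crossing.

Lemma block_cross_order P Q u z w : block P -> block Q ->
  P u -> ~ Q u -> P z -> Q z -> Q w -> ~ P w ->
  ((u < z)%nat /\ (z < w)%nat) \/ ((w < z)%nat /\ (z < u)%nat).
Proof.
  intros [_ cP] [_ cQ] Pu Qu Pz Qz Qw Pw.
  assert (u <> z) by (intros ->; auto). assert (w <> z) by (intros ->; auto).
  destruct (Nat.lt_gt_cases u z) as [[uz|uz] _], (Nat.lt_gt_cases w z) as [[wz|wz] _]; auto;
    exfalso; destruct (Nat.lt_ge_cases u w).
  - apply Pw, (cP u w z); auto; lia.
  - apply Qu, (cQ w u z); auto; lia.
  - apply Qu, (cQ z u w); auto; lia.
  - apply Pw, (cP z w u); auto; lia.
Qed.

Theorem corollary3p9 (x : nat -> R) (F : option nat) (I : nat -> nat -> Prop)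
  (G : option nat) (L : nat -> nat -> Prop) :
  in_J x -> norming_partition x F I -> norming_partition x G L ->
  forall i j, in_F F i -> in_F G j ->
    (forall n, I i n -> L j n) \/ (forall n, L j n -> I i n) \/
    (forall n, I i n -> L j n -> False).
Proof.
  intros HJ HI HL i j Hi Hj.
  destruct (classic (forall n, I i n -> L j n)) as [HIL|HIL]; [left; auto|].
  destruct (classic (forall n, L j n -> I i n)) as [HLI|HLI]; [right; left; auto|].
  right; right. intros z Iz Lz.
  apply not_all_ex_not in HIL as [u Hu]. apply imply_to_and in Hu as [Iu Lu].
  apply not_all_ex_not in HLI as [w Hw]. apply imply_to_and in Hw as [Lw Iw].
  pose proof (family_block F I i (proj1 (proj1 HI)) Hi) as HbI.
  pose proof (family_block G L j (proj1 (proj1 HL)) Hj) as HbL.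
  destruct (block_cross_order (I i) (L j) u z w HbI HbL Iu Lu Iz Lz Lw Iw) as [[uz zw]|[wz zu]].
  - exact (no_crossing x F G I L i j u z w HJ HI HL Hi Hj Iu Lu Iz Lz Lw Iw uz zw).
  - exact (no_crossing x G F L I j i w z u HJ HL HI Hj Hi Lw Iw Lz Iz Iu Lu wz zu).
Qed.
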